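(* For every $d\ge1$ there is a constant $c=c(d)>0$ such that for every valued field $K$ and every finite $X\subseteq K^d$ with $|X|=n$, there is a point $a\in X$ which lies in $\operatorname{conv}(Y)$ for at least $c\binom{n}{d+1}$ of the $\binom{n}{d+1}$ subsets $Y\subseteq X$ with $|Y|=d+1$.
   Context: $K$ is a field with valuation $\nu$ and valuation ring $\mathcal{O}=\{x:\nu(x)\ge0\}$. For $Y\subseteq K^d$, $\operatorname{conv}(Y)=\{\sum_{i=1}^n\alpha_iy_i: n\ge1,y_i\in Y,\alpha_i\in\mathcal{O},\sum_i\alpha_i=1\}$. *)

From HB Require Import structures.
From mathcomp Require Import all_boot all_order all_algebra.
From mathcomp Require Import finmap.
Set Implicit Arguments. Unset Strict Implicit. Unset Printing Implicit Defensive.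
Import Order.TTheory GRing.Theory Num.Theory.
Local Open Scope fset_scope.
Local Open Scope ring_scope.

Definition ordered_abelian_group (G : zmodType) (le : rel G) : Prop :=
  [/\ reflexive le, antisymmetric le, transitive le, total le
    & forall x y z : G, le x y -> le (x + z) (y + z)].

(* G extended by +oo, represented as option G (None = +oo). *)
Definition oleq (G : zmodType) (le : rel G) (a b : option G) : bool :=
  match a, b with
  | _, None => true
  | None, Some _ => false
  | Some a', Some b' => le a' b'
  end.

Definition oadd (G : zmodType) (a b : option G) : option G :=
  match a, b with
  | Some a', Some b' => Some (a' + b')
  | _, _ => None
  end.

Definition is_valuation (K : fieldType) (G : zmodType) (le : rel G)
  (nu : K -> option G) : Prop :=
  [/\ forall x : K, nu x = None <-> x = 0,
      forall x y : K, nu (x * y) = oadd (nu x) (nu y)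
    & forall x y : K, oleq le (nu x) (nu (x + y)) \/ oleq le (nu y) (nu (x + y))].

Definition in_valring (K : fieldType) (G : zmodType) (le : rel G)
  (nu : K -> option G) (x : K) : Prop := oleq le (Some 0) (nu x).

(* x \in conv(Y): x = sum_i alpha_i y_i, n >= 1, y_i in Y, alpha_i in O,
   sum_i alpha_i = 1.  The list s encodes the pairs (y_i, alpha_i). *)
Definition in_conv (K : fieldType) (G : zmodType) (le : rel G)
  (nu : K -> option G) (d : nat) (Y : {fset 'rV[K]_d}) (x : 'rV[K]_d) : Prop :=
  exists s : seq ('rV[K]_d * K),
    [/\ s != [::],
        forall p, p \in s -> p.1 \in Y,
        forall p, p \in s -> in_valring le nu p.2,
        \sum_(p <- s) p.2 = 1
      & x = \sum_(p <- s) p.2 *: p.1].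

From HB Require Import structures.
From mathcomp Require Import all_boot all_order all_algebra.
From mathcomp Require Import finmap.
From Stdlib Require Import ClassicalEpsilon.
Set Implicit Arguments. Unset Strict Implicit. Unset Printing Implicit Defensive.
Import Order.TTheory GRing.Theory Num.Theory.
Local Open Scope fset_scope.

(* The argument has a combinatorial half and a geometric half.
   - Double counting (Section DoubleCounting): let R a Y be a relation between
     points and k-subsets of an n-element set such that R a Y holds when a is in
     Y, and every (k+1)-set Z contains some a with R a (Z \ a).  Sending a pair
     (a, Y) with |Y| = k either to itself (if R a Y) or to the "repaired" pair
     (a', (a u Y) \ a') produces R-pairs, each hit at most k+2 times; hence
     n C(n,k) <= (k+2) #{R-pairs}, and some point a has
     C(n,k) <= (k+2) #{Y | R a Y}.
   - Radon's lemma over a valued field (Section ValuedField): more than d+1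
     points of K^d are affinely dependent, sum_i l_i x_i = 0 with sum_i l_i = 0;
     the point x_j whose coefficient has minimal valuation is then the
     combination of the others with weights -l_i/l_j, which lie in the
     valuation ring and sum to 1.
   The theorem follows by taking k = d+1 and R a Y := a in conv(Y). *)

Section DoubleCounting.
Variables (T : finType) (k : nat) (R : T -> {set T} -> bool).
Hypothesis R_mem : forall a (Y : {set T}), a \in Y -> R a Y.
Hypothesis R_split : forall Z : {set T}, #|Z| = k.+1 -> exists2 a, a \in Z & R a (Z :\ a).

Definition good_pairs : {set T * {set T}} :=
  [set q : T * {set T} | (#|q.2| == k) && R q.1 q.2].
Definition good_sets (a : T) : {set {set T}} :=
  [set Y : {set T} | (#|Y| == k) && R a Y].

Section Repair.
Variable b : T.

Definition split_point (Z : {set T}) : T :=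
  if [pick a in Z | R a (Z :\ a)] is Some a then a else b.

Lemma split_pointP (Z : {set T}) : #|Z| = k.+1 ->
  split_point Z \in Z /\ R (split_point Z) (Z :\ split_point Z).
Proof.
move=> cZ; rewrite /split_point; case: pickP => [a /andP[]//|none].
have [a aZ Ra] := R_split cZ; by move: (none a); rewrite aZ Ra.
Qed.

Definition repair (q : T * {set T}) : T * {set T} :=
  let Z := q.1 |: q.2 in if q.1 \in q.2 then q else (split_point Z, Z :\ split_point Z).

Lemma repair_good (q : T * {set T}) : #|q.2| = k -> repair q \in good_pairs.
Proof.
case: q => a Y /= cY; rewrite /repair inE /=; case: ifP => aY; first by rewrite cY eqxx R_mem.
have cZ : #|a |: Y| = k.+1 by rewrite cardsU1 aY cY.
have [gZ Rg] := split_pointP cZ.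
by rewrite Rg andbT; move: cZ; rewrite (cardsD1 (split_point (a |: Y))) gZ add1n => -[->].
Qed.

(* A good pair (c, W) is the image only of itself and of pairs
   (a, (c u W) \ a) with a in c u W. *)
Lemma repair_fibre (q : T * {set T}) : q \in good_pairs ->
  #|[set p : T * {set T} | (#|p.2| == k) && (repair p == q)]| <= k.+2.
Proof.
case: q => c W; rewrite inE /= => /andP[/eqP cW _].
pose Z := c |: W.
have sub : [set p : T * {set T} | (#|p.2| == k) && (repair p == (c, W))]
             \subset (c, W) |: [set (a, Z :\ a) | a in Z].
  apply/subsetP => -[a Y]; rewrite !inE /= => /andP[cY /eqP]; rewrite /repair /=.
  case: ifP => aY; first by move=> ->; rewrite eqxx.
  have cZ : #|a |: Y| = k.+1 by rewrite cardsU1 aY (eqP cY).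
  have [gZ _] := split_pointP cZ.
  case=> gc gW; apply/orP; right; apply/imsetP; exists a.
    by rewrite /Z -gc -gW (setD1K gZ) setU11.
  by rewrite /Z -gc -gW (setD1K gZ) setU1K ?aY.
apply: leq_trans (subset_leq_card sub) _.
rewrite cardsU1 -add1n leq_add ?leq_b1 //.
by apply: leq_trans (leq_imset_card _ _) _; rewrite cardsU1 cW -add1n leq_add2r leq_b1.
Qed.
End Repair.

(* Counting all pairs (a, Y) with |Y| = k through the repair map. *)
Lemma card_good_pairs (b : T) : #|T| * 'C(#|T|, k) <= k.+2 * #|good_pairs|.
Proof.
have -> : #|T| * 'C(#|T|, k) = #|setX [set: T] [set Y : {set T} | #|Y| == k]|.
  by rewrite cardsX cardsT card_draws.
rewrite -sum1_card (partition_big (repair b) (mem good_pairs)) /=; last first.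
  by move=> -[a Y] /setXP[_]; rewrite inE => /eqP; exact: (@repair_good b (a, Y)).
rewrite -sum1_card mulnC big_distrl /= leq_sum // => q qgood.
rewrite mul1n sum1dep_card; apply: leq_trans (@repair_fibre b q qgood).
by apply/subset_leq_card/subsetP => -[a Y]; rewrite !inE.
Qed.

Lemma card_good_pairsE : #|good_pairs| = \sum_a #|good_sets a|.
Proof.
rewrite -sum1_card (partition_big fst xpredT) //=; apply: eq_bigr => a _.
have pair_a_inj : injective (pair a : {set T} -> T * {set T}) by move=> Y Y' [].
rewrite sum1dep_card -(card_imset _ pair_a_inj).
apply: eq_card => -[c Y]; rewrite !inE /=; apply/idP/imsetP.
  by case/andP=> /andP[cY RY] /eqP ca; subst c; exists Y; rewrite // inE cY.
by case=> Y'; rewrite inE => /andP[cY RY] [-> ->]; rewrite cY RY eqxx.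
Qed.

Lemma double_counting (b : T) :
  exists a : T, 'C(#|T|, k) <= k.+2 * #|good_sets a|.
Proof.
pose m := [arg max_(a > b) #|good_sets a|]; exists m.
have sum_le : \sum_a #|good_sets a| <= #|T| * #|good_sets m|.
  rewrite -sum_nat_const leq_sum // => a _; rewrite /m; case: arg_maxnP => // i _; exact.
have T_pos : 0 < #|T| by apply/card_gt0P; exists b.
have := card_good_pairs b; rewrite card_good_pairsE => /leq_trans.
by move=> /(_ _ (leq_mul (leqnn k.+2) sum_le)); rewrite mulnCA leq_pmul2l.
Qed.
End DoubleCounting.

Local Open Scope ring_scope.

Lemma exists_minimizer (I : finType) (T : Type) (r : rel T) :
  transitive r -> total r -> forall (f : I -> T) (i0 : I),
  exists j, forall i, r (f j) (f i).
Proof.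
move=> r_trans r_total f i0.
suff [j _ jmin] : exists2 j, j \in i0 :: enum I & all (fun i => r (f j) (f i)) (i0 :: enum I).
  by exists j => i; apply: (allP jmin); rewrite inE mem_enum orbT.
elim: (enum I) i0 => [|i s IH] i0.
  by exists i0; rewrite ?mem_head //= andbT; case/orP: (r_total (f i0) (f i0)).
have [m ms mmin] := IH i.
case: (boolP (r (f i0) (f m))) => [le0m|].
  exists i0; first exact: mem_head.
  apply/allP => z; rewrite in_cons => /orP[/eqP ->|zs]; first by case/orP: (r_total (f i0) (f i0)).
  exact: r_trans le0m (allP mmin z zs).
move=> /negbTE gt0m; have lem0 : r (f m) (f i0) by case/orP: (r_total (f i0) (f m)); rewrite ?gt0m.
exists m; first by rewrite in_cons ms orbT.
by rewrite /= lem0.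
Qed.

(* More than d+1 points of K^d admit a nontrivial affine dependence: the
   vectors (x_i, 1) in K^(d+1) are linearly dependent. *)
Lemma affine_dependence (K : fieldType) (d n : nat) (x : 'I_n -> 'rV[K]_d) :
  (d.+1 < n)%N -> exists l : 'I_n -> K,
    [/\ exists i, l i != 0, \sum_i l i = 0 & \sum_i l i *: x i = 0].
Proof.
move=> ltdn.
pose M := \matrix_(i < n) row_mx (x i) (1 : 'rV[K]_1).
have : kermx M != 0.
  rewrite kermx_eq0 /row_free; apply: contraTneq (rank_leq_col M) => ->.
  by rewrite -ltnNge addn1.
case/rowV0Pn => lam /sub_kermxP lamM lam0.
pose l : 'I_n -> K := fun i => lam 0 i; exists l.
have lamM_at j : \sum_i l i * row_mx (x i) (1 : 'rV[K]_1) 0 j = 0.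
  have := congr1 (fun A : 'M_(1, d + 1) => A 0 j) lamM; rewrite !mxE => E.
  by rewrite -[RHS]E; apply: eq_bigr => i _; rewrite /M [in X in _ = X]mxE.
split.
- have [i li | l0] := pickP (fun i => l i != 0); first by exists i.
  move: lam0; rewrite (_ : lam = 0) ?eqxx //.
  by apply/rowP => i; rewrite [RHS]mxE; apply/eqP; exact: negbFE (l0 i).
- by rewrite -[RHS](lamM_at (rshift d 0)); apply: eq_bigr => i _; rewrite row_mxEr mxE mulr1.
- apply/rowP => j; rewrite summxE mxE -[RHS](lamM_at (lshift 1 j)).
  by apply: eq_bigr => i _; rewrite row_mxEl mxE.
Qed.

Section ValuedField.
Variables (K : fieldType) (G : zmodType) (le : rel G) (nu : K -> option G).
Hypothesis le_oag : ordered_abelian_group le.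
Hypothesis nu_val : is_valuation le nu.

Lemma oleq_trans : transitive (oleq le).
Proof. by case: le_oag => _ _ le_trans _ _ [b|] [a|] [c|] //=; apply: le_trans. Qed.

Lemma oleq_total : total (oleq le).
Proof. by case: le_oag => _ _ _ le_total _ [a|] [b|] //=. Qed.

Lemma nu_eqNone x : (nu x == None) = (x == 0).
Proof. by case: nu_val => nu0 _ _; apply/eqP/eqP => /nu0. Qed.

Lemma nu_finite x : x != 0 -> exists g, nu x = Some g.
Proof. by rewrite -nu_eqNone; case: (nu x) => // g _; exists g. Qed.

Lemma nuM x y : nu (x * y) = oadd (nu x) (nu y).
Proof. by case: nu_val. Qed.

Lemma double_eq0 (h : G) : h + h = 0 -> h = 0.
Proof.
case: le_oag => _ le_anti _ le_total le_add hh.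
by case/orP: (le_total 0 h) => H; have := le_add _ _ h H; rewrite add0r hh => H';
   apply: le_anti; rewrite H H'.
Qed.

Lemma nu_square1 u : u * u = 1 -> nu u = Some 0.
Proof.
move=> uu; have u0 : u != 0 by apply: contra_eq_neq uu => ->; rewrite mul0r eq_sym oner_neq0.
have one0 : nu 1 = Some 0.
  have [g E] := nu_finite (oner_neq0 K).
  have := nuM 1 1; rewrite mulr1 E /= => -[] /esym /eqP.
  by rewrite -subr_eq0 addrK => /eqP ->.
have [g E] := nu_finite u0.
by have := nuM u u; rewrite uu one0 E => -[] /esym /double_eq0 ->.
Qed.

Lemma nuN x : nu (- x) = nu x.
Proof.
rewrite -mulN1r nuM (@nu_square1 (-1)) ?mulrNN ?mulr1 //.
by case: (nu x) => //= a; rewrite add0r.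
Qed.

Lemma valring_div z y : y != 0 -> oleq le (nu y) (nu (z * y)) -> in_valring le nu z.
Proof.
move=> /nu_finite[g Ey].
rewrite /in_valring nuM Ey; case: (nu z) => //= h; case: le_oag => _ _ _ _ le_add gh.
by have := le_add _ _ (- g) gh; rewrite subrr addrK.
Qed.

Lemma in_conv_mem d (Y : {fset 'rV[K]_d}) a : a \in Y -> in_conv le nu Y a.
Proof.
move=> aY; exists [:: (a, 1)]; split=> //.
- by move=> p; rewrite inE => /eqP ->.
- move=> p; rewrite inE => /eqP -> /=; rewrite /in_valring (@nu_square1 1) ?mulr1 //=.
  by case: le_oag.
- by rewrite big_seq1.
- by rewrite big_seq1 scale1r.
Qed.

(* Affine dependence in a valued field: if sum_i l_i = 0 and sum_i l_i x_i = 0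
   with some l_i nonzero, then the point x_j whose coefficient has minimal
   valuation is the O-convex combination of the others with weights -l_i/l_j. *)
Lemma dependence_in_conv d n (x : 'I_n -> 'rV[K]_d) (l : 'I_n -> K) :
  (exists i, l i != 0) -> \sum_i l i = 0 -> \sum_i l i *: x i = 0 ->
  exists j, forall Y : {fset 'rV[K]_d},
    (forall i, i != j -> x i \in Y) -> in_conv le nu Y (x j).
Proof.
move=> [i0 li0] sum_l sum_lx.
have [j jmin] := exists_minimizer oleq_trans oleq_total (nu \o l) i0.
have lj0 : l j != 0.
  have [g Ei0] := nu_finite li0.
  by apply: contraTneq (jmin i0) => /= /eqP; rewrite -nu_eqNone Ei0 => /eqP ->.
pose w i := - l i / l j.
have sum_w : \sum_(i | i != j) w i = 1.
  rewrite -mulr_suml sumrN; have := sum_l; rewrite (bigD1 j) //= => /eqP.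
  by rewrite addrC addr_eq0 => /eqP ->; rewrite opprK divff.
exists j => Y xY; exists [seq (x i, w i) | i <- index_enum 'I_n & i != j]; split.
- apply: contra_neq (oner_neq0 K) => s0.
  by have := congr1 (fun s => \sum_(p <- s) p.2) s0; rewrite /= big_map big_filter sum_w big_nil.
- by move=> p /mapP[i]; rewrite mem_filter => /andP[ij _] ->; apply: xY.
- move=> p /mapP[i] _ -> /=; apply: (valring_div lj0).
  by rewrite /w divfK // nuN; apply: jmin.
- by rewrite big_map big_filter.
- rewrite big_map big_filter /=.
  have := sum_lx; rewrite (bigD1 j) //= => /eqP; rewrite addrC addr_eq0 => /eqP sum_rest.
  rewrite (eq_bigr (fun i => (- (l j)^-1) *: (l i *: x i))); last first.
    by move=> i _; rewrite /w scalerA mulNr mulrC mulNr.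
  by rewrite -scaler_sumr sum_rest scalerN scaleNr opprK scalerA mulVf // scale1r.
Qed.

Lemma valued_radon d (Z : {fset 'rV[K]_d}) : (d.+1 < #|` Z|)%N ->
  exists2 z, z \in Z & in_conv le nu (Z `\ z) z.
Proof.
move=> dZ; pose x (i : 'I_#|` Z|) := nth 0 (enum_fset Z) i.
have xZ i : x i \in Z by apply: mem_nth.
have x_inj : injective x.
  by move=> i i' /eqP; rewrite nth_uniq ?fset_uniq // => /eqP /val_inj.
have [l [l_nz sum_l sum_lx]] := affine_dependence x dZ.
have [j jconv] := dependence_in_conv l_nz sum_l sum_lx.
exists (x j) => //; apply: jconv => i ij.
by rewrite in_fsetD1 xZ andbT (inj_eq x_inj).
Qed.
End ValuedField.

(* Transport between finite subsets of the finite type of elements of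
   X : {fset T}, where the counting takes place, and finite sets in T. *)
Section FinsetOfFset.
Variables (T : choiceType) (X : {fset T}).

Definition fset_of (Y : {set X}) : {fset T} := [fsetval y in Y].

Lemma mem_fset_of (Y : {set X}) (u : X) : (val u \in fset_of Y) = (u \in Y).
Proof. exact: val_in_fset. Qed.

Lemma fset_of_sub (Y : {set X}) : fset_of Y `<=` X.
Proof. by apply/fsubsetP => v /in_fset_valP[]. Qed.

Lemma card_fset_of (Y : {set X}) : #|` fset_of Y| = #|Y|.
Proof. by rewrite card_imfset /= -?cardE //; exact: val_inj. Qed.

Lemma fset_of_inj : injective fset_of.
Proof. by move=> Y Y' /fsetP eqY; apply/setP => u; rewrite -!mem_fset_of eqY. Qed.

Lemma fset_ofD1 (Y : {set X}) (a : X) : fset_of (Y :\ a) = fset_of Y `\ val a.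
Proof.
apply/fsetP => v; rewrite in_fsetD1; have [vX|vX] := boolP (v \in X).
  by rewrite -[v]/(val [` vX]) !mem_fset_of !inE (inj_eq val_inj).
by rewrite !in_fset_valF // andbF.
Qed.
End FinsetOfFset.

(* Classical decision of a proposition, needed to count sets with a
   non-boolean property. *)
Definition holds (P : Prop) : bool := if excluded_middle_informative P then true else false.

Lemma holdsP (P : Prop) : reflect P (holds P).
Proof. by rewrite /holds; case: excluded_middle_informative => ?; constructor. Qed.

Theorem theorem4p16 :
  forall d : nat, (1 <= d)%N ->
  exists c : rat, 0 < c /\
    forall (K : fieldType) (G : zmodType) (le : rel G) (nu : K -> option G),
      ordered_abelian_group le -> is_valuation le nu ->
      forall X : {fset 'rV[K]_d}, (0 < #|` X|)%N ->
      exists2 a : 'rV[K]_d, a \in X &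
        exists S : {fset {fset 'rV[K]_d}},
          [/\ forall Y, Y \in S -> Y `<=` X,
              forall Y, Y \in S -> #|` Y| = d.+1,
              forall Y, Y \in S -> in_conv le nu Y a
            & c * ('C(#|` X|, d.+1))%:R <= (#|` S|)%:R].
Proof.
move=> d _; exists (d.+3)%:R^-1; split; first by rewrite invr_gt0 ltr0n.
move=> K G le nu le_oag nu_val X; rewrite cardfs_gt0 => /fset0Pn[x0 x0X].
pose R (a : X) (Y : {set X}) := holds (in_conv le nu (fset_of Y) (val a)).
have R_mem (a : X) (Y : {set X}) : a \in Y -> R a Y.
  by move=> aY; apply/holdsP/in_conv_mem; rewrite ?mem_fset_of.
have R_split (Z : {set X}) : #|Z| = d.+2 -> exists2 a, a \in Z & R a (Z :\ a).
  move=> cZ; have [|z /in_fset_valP[zX zZ] zconv] := valued_radon le_oag nu_val (Z := fset_of Z).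
    by rewrite card_fset_of cZ.
  by exists [` zX] => //; apply/holdsP; rewrite fset_ofD1.
have [a Ca] := double_counting R_mem R_split [` x0X].
exists (val a); first exact: fsvalP.
exists [fset fset_of Y | Y in good_sets d.+1 R a]; split.
- by move=> Y0 /imfsetP[Y _ ->]; apply: fset_of_sub.
- by move=> Y0 /imfsetP[Y]; rewrite inE => /andP[/eqP <- _] ->; rewrite card_fset_of.
- by move=> Y0 /imfsetP[Y]; rewrite inE => /andP[_ /holdsP ?] ->.
rewrite card_imfset; last exact: fset_of_inj.
by rewrite -cardE cardfE mulrC ler_pdivrMr ?ltr0n // -natrM ler_nat mulnC.
Qed.
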